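(* In the two-type setting, define $\bar h:\mathbb R\times[0,1]\to\mathbb R\times[0,1]$ by $\bar h(p)=\big(\phi_1p_1\psi(\beta_2p_2),\,h_2(0,p_2)\big)$. Then for every fixed $k\in\mathbb N$, $$\lim_{p_1\to0^+}\frac{\bar h^k_1(p)}{h^k_1(p)}=1\qquad\text{uniformly in }p_2\in[0,1],$$ where $\bar h^k_1$ and $h^k_1$ denote the first coordinates of the $k$-th iterates of $\bar h$ and $h$.
   Context: Two-type limiting map: $\beta_1,\beta_2>0$, $\alpha(1),\alpha(2)\in[0,1)$, $\phi_i=(1-\alpha(i))\beta_i$. For $p\in[0,1]^2$, $S(p)=\beta_1p_1+\beta_2p_2$ and $f^{(i)}(p)=(1-e^{-S(p)})\beta_ip_i/S(p)$ ($=0$ if $S(p)=0$). For $\alpha\in(0,1)$ let $g_\alpha(x)=\frac{(1-\sqrt{1-4(1-\alpha)x(1-x)})^3}{8(1-\alpha)^2x^2}$ for $x\in(0,1]$ and $g_\alpha(0)=0$; let $g_0(x)=x$ for $x\le1/2$ and $g_0(x)=(1-x)^3/x^2$ for $x>1/2$. $h(p)=(h_1(p),h_2(p))$ with $h_i(p)=g_{\alpha(i)}(f^{(i)}(p))$. $\psi(x)=(1-e^{-x})/x$, $\psi(0)=1$. *)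

From Stdlib Require Import Reals.
Open Scope R_scope.

(* Two-type limiting map. Parameters: b1 b2 = beta_1 beta_2, a1 a2 = alpha(1) alpha(2). *)

Definition phi (a b : R) : R := (1 - a) * b.

Definition S2 (b1 b2 : R) (p : R * R) : R := b1 * fst p + b2 * snd p.

Definition f_i (b1 b2 bi pi : R) (p : R * R) : R :=
  let s := S2 b1 b2 p in
  if Req_EM_T s 0 then 0 else (1 - exp (- s)) * bi * pi / s.

Definition f1 (b1 b2 : R) (p : R * R) : R := f_i b1 b2 b1 (fst p) p.
Definition f2 (b1 b2 : R) (p : R * R) : R := f_i b1 b2 b2 (snd p) p.

(* g_alpha; the case alpha = 0 is the separately given g_0 *)
Definition g (a x : R) : R :=
  if Req_EM_T a 0 then
    (if Rle_dec x (1/2) then x else (1 - x) ^ 3 / x ^ 2)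
  else
    (if Req_EM_T x 0 then 0
     else (1 - sqrt (1 - 4 * (1 - a) * x * (1 - x))) ^ 3
          / (8 * (1 - a) ^ 2 * x ^ 2)).

Definition h (b1 b2 a1 a2 : R) (p : R * R) : R * R :=
  (g a1 (f1 b1 b2 p), g a2 (f2 b1 b2 p)).

Definition psi (x : R) : R :=
  if Req_EM_T x 0 then 1 else (1 - exp (- x)) / x.

Definition hbar (b1 b2 a1 a2 : R) (p : R * R) : R * R :=
  (phi a1 b1 * fst p * psi (b2 * snd p), snd (h b1 b2 a1 a2 (0, snd p))).

From Stdlib Require Import Reals Lra Psatz.
Open Scope R_scope.

(* As p1 -> 0+, the first coordinate along the orbit of h stays of order p1 and
   the second stays in [0, 8].  Since f^(1)(p) = psi(S(p)) beta_1 p_1 and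
   g_alpha(t) = (1 - alpha) t + o(t) at 0, induction on k shows that h^k_1(p)/p1
   and h^k_2(p) converge, uniformly in p2, to hbar^k_1(p)/p1 =
   prod_{j<k} phi_1 psi(beta_2 hbar^j_2(p)) and hbar^k_2(p); the limits are built
   from the uniformly continuous maps psi and g on compact ranges.  The first
   limit is at least (phi_1 e^{-8 beta_2})^k > 0, so the ratio tends to 1. *)

Lemma exp_le_exp x y : x <= y -> exp x <= exp y.
Proof.
  intros Hxy; destruct (Rle_lt_or_eq_dec _ _ Hxy) as [Hlt | ->].
  - left; exact (exp_increasing _ _ Hlt).
  - right; reflexivity.
Qed.

Lemma psi_neq0 x : x <> 0 -> psi x = (1 - exp (- x)) / x.
Proof. intros Hx; unfold psi; destruct (Req_EM_T x 0); [contradiction | reflexivity]. Qed.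

Lemma psi_bounds s K : 0 <= s <= K -> exp (- K) <= psi s <= 1.
Proof.
  intros [Hs0 HsK].
  assert (HK : exp (- K) <= exp (- s)) by (apply exp_le_exp; lra).
  destruct (Req_dec s 0) as [-> | Hs].
  - unfold psi; destruct (Req_EM_T 0 0) as [_ | ]; [| contradiction].
    rewrite Ropp_0, exp_0 in HK; lra.
  - rewrite psi_neq0 by exact Hs.
    assert (Hpos : 0 < s) by lra.
    pose proof (exp_ineq1_le (- s)). pose proof (exp_ineq1_le s).
    pose proof (exp_pos s). pose proof (exp_pos (- s)).
    assert (E : exp s * exp (- s) = 1) by (rewrite <- exp_plus, Rplus_opp_r; apply exp_0).
    split; apply Rmult_le_reg_r with s; auto;
      unfold Rdiv; rewrite Rmult_assoc, Rinv_l by lra; nra.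
Qed.

Lemma psi_range s : 0 <= s -> 0 < psi s <= 1.
Proof.
  intros Hs; pose proof (psi_bounds s s (conj Hs (Rle_refl s))); pose proof (exp_pos (- s)).
  lra.
Qed.

(* At 0 the difference quotient of psi is the one defining exp' 0 = 1. *)
Lemma continuity_pt_psi x : continuity_pt psi x.
Proof.
  destruct (Req_dec x 0) as [-> | Hx].
  - intros eps Heps. destruct (derivable_pt_lim_exp 0 eps Heps) as [d Hd].
    exists d; split; [apply cond_pos |].
    intros y [[_ Hy0] Hy]; simpl in *; unfold R_dist in *.
    rewrite Rminus_0_r in Hy.
    unfold psi; destruct (Req_EM_T 0 0); [| contradiction].
    destruct (Req_EM_T y 0); [congruence |].
    specialize (Hd (- y) ltac:(lra) ltac:(rewrite Rabs_Ropp; exact Hy)).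
    rewrite exp_0, Rplus_0_l in Hd.
    replace ((1 - exp (- y)) / y - 1) with ((exp (- y) - 1) / - y - 1) by (field; lra).
    exact Hd.
  - apply continuity_pt_locally_ext with (f := fun s => (1 - exp (- s)) / s) (a := Rabs x).
    + apply Rabs_pos_lt; exact Hx.
    + intros y Hy; rewrite psi_neq0; [reflexivity |].
      intros ->; unfold Rdist in Hy; rewrite Rminus_0_l, Rabs_Ropp in Hy; lra.
    + reg.
Qed.

Lemma psi_unif_cont K : uniform_continuity psi (fun s => 0 <= s <= K).
Proof. apply Heine; [apply compact_P3 | intros; apply continuity_pt_psi]. Qed.

Lemma S2_nonneg b1 b2 p : 0 < b1 -> 0 < b2 -> 0 <= fst p -> 0 <= snd p -> 0 <= S2 b1 b2 p.
Proof. intros; unfold S2; nra. Qed.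

Lemma f_i_psi b1 b2 bi pi p : (pi = 0 \/ S2 b1 b2 p <> 0) ->
  f_i b1 b2 bi pi p = psi (S2 b1 b2 p) * bi * pi.
Proof.
  intros Hpi; unfold f_i; destruct (Req_EM_T (S2 b1 b2 p) 0) as [E | E].
  - destruct Hpi as [-> | ]; [ring | contradiction].
  - rewrite psi_neq0 by exact E; field; exact E.
Qed.

Lemma f1_psi b1 b2 p : 0 < b1 -> 0 < b2 -> 0 <= fst p -> 0 <= snd p ->
  f1 b1 b2 p = psi (S2 b1 b2 p) * b1 * fst p.
Proof.
  intros; apply f_i_psi; unfold S2.
  destruct (Req_dec (fst p) 0); [left | right; nra]; auto.
Qed.

Lemma f2_psi b1 b2 p : 0 < b1 -> 0 < b2 -> 0 <= fst p -> 0 <= snd p ->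
  f2 b1 b2 p = psi (S2 b1 b2 p) * b2 * snd p.
Proof.
  intros; apply f_i_psi; unfold S2.
  destruct (Req_dec (snd p) 0); [left | right; nra]; auto.
Qed.

Lemma f_i_bounds b1 b2 bi pi p : 0 <= bi * pi <= S2 b1 b2 p -> 0 <= f_i b1 b2 bi pi p <= 1.
Proof.
  intros Hpi; unfold f_i; destruct (Req_EM_T (S2 b1 b2 p) 0) as [_ | E]; [lra |].
  set (s := S2 b1 b2 p) in *.
  assert (Hs : 0 < s) by lra.
  pose proof (exp_pos (- s)).
  assert (exp (- s) <= 1) by (rewrite <- exp_0; apply exp_le_exp; lra).
  assert (0 <= bi * pi / s <= 1).
  { split; [apply Rmult_le_pos; [lra | left; apply Rinv_0_lt_compat; lra] |].
    apply Rmult_le_reg_r with s; auto.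
    unfold Rdiv; rewrite Rmult_assoc, Rinv_l by lra; lra. }
  replace ((1 - exp (- s)) * bi * pi / s) with ((1 - exp (- s)) * (bi * pi / s)) by (field; lra).
  nra.
Qed.

Lemma f1_bounds b1 b2 p : 0 < b1 -> 0 < b2 -> 0 <= fst p -> 0 <= snd p ->
  0 <= f1 b1 b2 p <= 1.
Proof. intros; apply f_i_bounds; unfold S2; nra. Qed.

Lemma f2_bounds b1 b2 p : 0 < b1 -> 0 < b2 -> 0 <= fst p -> 0 <= snd p ->
  0 <= f2 b1 b2 p <= 1.
Proof. intros; apply f_i_bounds; unfold S2; nra. Qed.

Lemma Rmin_Rabs x y : Rmin x y = (x + y - Rabs (x - y)) / 2.
Proof. unfold Rmin; destruct (Rle_dec x y); [rewrite Rabs_left1 | rewrite Rabs_right]; lra. Qed.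

Lemma Rmax_Rabs x y : Rmax x y = (x + y + Rabs (x - y)) / 2.
Proof. unfold Rmax; destruct (Rle_dec x y); [rewrite Rabs_left1 | rewrite Rabs_right]; lra. Qed.

Lemma continuity_pt_Rabs_comp u x : continuity_pt u x -> continuity_pt (fun t => Rabs (u t)) x.
Proof. intros Hu; apply (continuity_pt_comp u Rabs); [exact Hu | apply Rcontinuity_abs]. Qed.

Lemma continuity_pt_Rmin u v x : continuity_pt u x -> continuity_pt v x ->
  continuity_pt (fun t => Rmin (u t) (v t)) x.
Proof.
  intros Hu Hv.
  apply continuity_pt_locally_ext with (fun t => (u t + v t - Rabs (u t - v t)) / 2) 1;
    [lra | intros; symmetry; apply Rmin_Rabs |].
  assert (continuity_pt (fun t => Rabs (u t - v t)) x)
    by (apply continuity_pt_Rabs_comp; reg).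
  reg.
Qed.

Lemma continuity_pt_Rmax u v x : continuity_pt u x -> continuity_pt v x ->
  continuity_pt (fun t => Rmax (u t) (v t)) x.
Proof.
  intros Hu Hv.
  apply continuity_pt_locally_ext with (fun t => (u t + v t + Rabs (u t - v t)) / 2) 1;
    [lra | intros; symmetry; apply Rmax_Rabs |].
  assert (continuity_pt (fun t => Rabs (u t - v t)) x)
    by (apply continuity_pt_Rabs_comp; reg).
  reg.
Qed.

Lemma g_discr_ge a x : a <= 1 -> a <= 1 - 4 * (1 - a) * x * (1 - x).
Proof. intros Ha; pose proof (pow2_ge_0 (2 * x - 1)); nra. Qed.

(* Rationalizing the numerator, [g_alpha x = (1 - alpha) x g_ratio alpha x] for
   alpha > 0; g_0 is the minimum of its two branches, which agree at 1/2. *)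
Definition g_ratio (a x : R) : R :=
  8 * (1 - x) ^ 3 / (1 + sqrt (1 - 4 * (1 - a) * x * (1 - x))) ^ 3.

Definition g_ext (a x : R) : R :=
  if Req_EM_T a 0 then Rmin x ((1 - x) ^ 3 / Rmax x (1 / 2) ^ 2)
  else (1 - a) * x * g_ratio a x.

Lemma g_ratio_denom_ge1 a x : 1 <= (1 + sqrt (1 - 4 * (1 - a) * x * (1 - x))) ^ 3.
Proof.
  pose proof (sqrt_pos (1 - 4 * (1 - a) * x * (1 - x))).
  apply pow_R1_Rle; lra.
Qed.

Lemma continuity_pt_g_ratio a x : 0 <= a <= 1 -> continuity_pt (g_ratio a) x.
Proof.
  intros Ha; pose proof (g_ratio_denom_ge1 a x).
  assert (Hdiscr : a <= 1 - 4 * (1 - a) * x * (1 - x)) by (apply g_discr_ge; lra).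
  unfold g_ratio; reg; lra.
Qed.

Lemma continuity_pt_g_ext a x : 0 <= a <= 1 -> continuity_pt (g_ext a) x.
Proof.
  intros Ha; unfold g_ext; destruct (Req_EM_T a 0).
  - assert (Hmax : continuity_pt (fun t => Rmax t (1 / 2)) x)
      by (apply continuity_pt_Rmax; reg).
    assert (Hmax_ge : 1 / 2 <= Rmax x (1 / 2)) by apply Rmax_r.
    apply continuity_pt_Rmin; [reg |].
    apply continuity_pt_div; [reg | | apply pow_nonzero; lra].
    apply (continuity_pt_comp (fun t => Rmax t (1 / 2)) (fun m => m ^ 2)); [exact Hmax | reg].
  - pose proof (continuity_pt_g_ratio a x Ha).
    apply continuity_pt_mult; [reg | assumption].
Qed.

Lemma g_eq_g_ext a x : 0 <= a < 1 -> 0 <= x <= 1 -> g a x = g_ext a x.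
Proof.
  intros Ha Hx; unfold g, g_ext; destruct (Req_EM_T a 0) as [_ | Ha0].
  - destruct (Rle_dec x (1 / 2)) as [Hle | Hgt].
    + rewrite Rmax_right by lra.
      rewrite Rmin_left; [reflexivity |].
      replace ((1 - x) ^ 3 / (1 / 2) ^ 2) with (4 * (1 - x) ^ 3) by field.
      assert (1 / 8 <= (1 - x) ^ 3)
        by (replace (1 / 8) with ((1 / 2) ^ 3) by field; apply pow_incr; lra).
      lra.
    + rewrite Rmax_left by lra.
      rewrite Rmin_right; [reflexivity |].
      assert (Hx2 : 0 < x ^ 2) by (apply pow_lt; lra).
      apply Rmult_le_reg_r with (x ^ 2); [exact Hx2 |].
      unfold Rdiv; rewrite Rmult_assoc, Rinv_l, Rmult_1_r by lra.
      assert ((1 - x) ^ 3 <= x ^ 3) by (apply pow_incr; lra).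
      simpl in *; nra.
  - unfold g_ratio; set (z := 1 - 4 * (1 - a) * x * (1 - x)).
    assert (Hz : 0 < z) by (pose proof (g_discr_ge a x); unfold z in *; lra).
    pose proof (sqrt_sqrt z (Rlt_le _ _ Hz)) as Hss.
    pose proof (sqrt_pos z) as Hs0.
    set (s := sqrt z) in *.
    destruct (Req_EM_T x 0) as [-> | Hx0]; [ring |].
    assert (Hconj : (1 - s) ^ 3 * (1 + s) ^ 3
                    = 8 * (1 - a) * x * (1 - x) ^ 3 * (8 * (1 - a) ^ 2 * x ^ 2)).
    { replace ((1 - s) ^ 3 * (1 + s) ^ 3) with ((1 - s * s) ^ 3) by ring.
      rewrite Hss; unfold z; ring. }
    transitivity ((1 - s) ^ 3 * (1 + s) ^ 3 / (8 * (1 - a) ^ 2 * x ^ 2 * (1 + s) ^ 3));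
      [| rewrite Hconj]; field; repeat split; lra.
Qed.

Lemma g_bounds a x : 0 <= a < 1 -> 0 <= x <= 1 -> 0 <= g a x <= 8.
Proof.
  intros Ha Hx; rewrite g_eq_g_ext by assumption; unfold g_ext.
  destruct (Req_EM_T a 0).
  - assert (Hq : 0 <= (1 - x) ^ 3 / Rmax x (1 / 2) ^ 2).
    { pose proof (Rmax_r x (1 / 2)).
      apply Rmult_le_pos; [apply pow_le; lra |].
      left; apply Rinv_0_lt_compat, pow_lt; lra. }
    pose proof (Rmin_l x ((1 - x) ^ 3 / Rmax x (1 / 2) ^ 2)).
    pose proof (Rmin_glb _ _ 0 (proj1 Hx) Hq); lra.
  - pose proof (g_ratio_denom_ge1 a x).
    assert (0 <= (1 - x) ^ 3 <= 1)
      by (split; [apply pow_le | rewrite <- (pow1 3) at 2; apply pow_incr]; lra).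
    assert (0 <= g_ratio a x <= 8).
    { unfold g_ratio; split.
      - apply Rmult_le_pos; [lra | left; apply Rinv_0_lt_compat; lra].
      - apply Rmult_le_reg_r with ((1 + sqrt (1 - 4 * (1 - a) * x * (1 - x))) ^ 3); [lra |].
        unfold Rdiv; rewrite Rmult_assoc, Rinv_l by lra; nra. }
    assert (0 <= (1 - a) * x <= 1) by nra.
    nra.
Qed.

Lemma uniform_continuity_ext f f' X : (forall x, X x -> f x = f' x) ->
  uniform_continuity f X -> uniform_continuity f' X.
Proof.
  intros E Hf eps; destruct (Hf eps) as [d Hd].
  exists d; intros x y Hx Hy Hxy; rewrite <- !E by assumption; auto.
Qed.

Lemma g_unif_cont a : 0 <= a < 1 -> uniform_continuity (g a) (fun x => 0 <= x <= 1).
Proof.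
  intros Ha; apply uniform_continuity_ext with (g_ext a).
  - intros; symmetry; apply g_eq_g_ext; assumption.
  - apply Heine; [apply compact_P3 | intros; apply continuity_pt_g_ext; lra].
Qed.

Lemma g_linear_near0 a : 0 <= a < 1 -> forall eps, 0 < eps -> exists d, 0 < d /\
  forall t, 0 <= t < d -> Rabs (g a t - (1 - a) * t) <= eps * t.
Proof.
  intros Ha eps Heps; destruct (Req_dec a 0) as [-> | Ha0].
  - exists (1 / 2); split; [lra |]; intros t Ht.
    unfold g; destruct (Req_EM_T 0 0); [| contradiction].
    destruct (Rle_dec t (1 / 2)); [| lra].
    replace (t - (1 - 0) * t) with 0 by ring; rewrite Rabs_R0; nra.
  - assert (Hratio0 : g_ratio a 0 = 1).
    { unfold g_ratio; rewrite Rmult_0_r, Rmult_0_l, Rminus_0_r, sqrt_1; field. }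
    destruct (continuity_pt_g_ratio a 0 ltac:(lra) eps Heps) as [d [Hd Hclose]].
    exists (Rmin d 1); split; [apply Rmin_pos; lra |]; intros t Ht.
    pose proof (Rmin_l d 1); pose proof (Rmin_r d 1).
    rewrite g_eq_g_ext by lra; unfold g_ext; destruct (Req_EM_T a 0); [contradiction |].
    destruct (Req_dec t 0) as [-> | Ht0].
    + rewrite !Rmult_0_r, Rmult_0_l, Rminus_0_r, Rabs_R0; lra.
    + assert (Hr : Rabs (g_ratio a t - 1) < eps).
      { rewrite <- Hratio0; apply Hclose; split; [split; [exact I | auto] |].
        simpl; unfold R_dist; rewrite Rminus_0_r, Rabs_right; lra. }
      replace ((1 - a) * t * g_ratio a t - (1 - a) * t)
        with ((1 - a) * t * (g_ratio a t - 1)) by ring.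
      rewrite Rabs_mult, (Rabs_right ((1 - a) * t)) by nra.
      assert (0 <= (1 - a) * t <= t) by nra.
      pose proof (Rabs_pos (g_ratio a t - 1)).
      nra.
Qed.

(** * Limits as p_1 -> 0+, uniform in p_2 *)

Section UniformLimit.

(* [x] stands for p_1 and [y] for p_2, which ranges over [D]. *)
Variable D : R -> Prop.

Definition near0 (P : R -> R -> Prop) : Prop :=
  exists d, 0 < d /\ forall x y, 0 < x < d -> D y -> P x y.

Definition unif_lim (F : R -> R -> R) (L : R -> R) : Prop :=
  forall eps, 0 < eps -> near0 (fun x y => Rabs (F x y - L y) < eps).

Definition bounded_on (L : R -> R) : Prop :=
  exists M, forall y, D y -> Rabs (L y) <= M.

Lemma near0_and P Q : near0 P -> near0 Q -> near0 (fun x y => P x y /\ Q x y).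
Proof.
  intros [d1 [Hd1 HP]] [d2 [Hd2 HQ]]; exists (Rmin d1 d2); split; [apply Rmin_pos; auto |].
  intros x y Hx Hy; pose proof (Rmin_l d1 d2); pose proof (Rmin_r d1 d2).
  split; [apply HP | apply HQ]; auto; lra.
Qed.

Lemma near0_impl (P Q : R -> R -> Prop) : near0 P ->
  (forall x y, 0 < x -> D y -> P x y -> Q x y) -> near0 Q.
Proof. intros [d [Hd HP]] HPQ; exists d; split; [exact Hd |]; intros; apply HPQ; auto; lra. Qed.

Lemma near0_forall (P : R -> R -> Prop) : (forall x y, 0 < x -> D y -> P x y) -> near0 P.
Proof. intros HP; exists 1; split; [lra |]; intros; apply HP; auto; lra. Qed.

Lemma bounded_on_const c : bounded_on (fun _ => c).
Proof. exists (Rabs c); intros; lra. Qed.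

Lemma bounded_on_mult L K : bounded_on L -> bounded_on K -> bounded_on (fun y => L y * K y).
Proof.
  intros [ML HL] [MK HK]; exists (Rabs ML * Rabs MK); intros y Hy; rewrite Rabs_mult.
  specialize (HL y Hy); specialize (HK y Hy); pose proof (Rle_abs ML); pose proof (Rle_abs MK).
  apply Rmult_le_compat; try apply Rabs_pos; lra.
Qed.

Lemma unif_lim_eq F G L L' : near0 (fun x y => F x y = G x y) ->
  (forall y, D y -> L y = L' y) -> unif_lim F L -> unif_lim G L'.
Proof.
  intros EF EL HF eps Heps; apply near0_impl with (1 := near0_and _ _ EF (HF eps Heps)).
  intros x y _ Hy [E A]; rewrite <- E, <- EL; auto.
Qed.

Lemma unif_lim_const L : unif_lim (fun _ y => L y) L.
Proof. intros eps Heps; apply near0_forall; intros; rewrite Rminus_diag, Rabs_R0; exact Heps. Qed.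

Lemma unif_lim_fst : unif_lim (fun x _ => x) (fun _ => 0).
Proof.
  intros eps Heps; exists eps; split; [exact Heps |].
  intros; rewrite Rminus_0_r, Rabs_right; lra.
Qed.

Lemma unif_lim_plus F G L K : unif_lim F L -> unif_lim G K ->
  unif_lim (fun x y => F x y + G x y) (fun y => L y + K y).
Proof.
  intros HF HG eps Heps.
  apply near0_impl with (1 := near0_and _ _ (HF (eps / 2) ltac:(lra)) (HG (eps / 2) ltac:(lra))).
  intros x y _ _ [A B].
  replace (F x y + G x y - (L y + K y)) with ((F x y - L y) + (G x y - K y)) by ring.
  eapply Rle_lt_trans; [apply Rabs_triang | lra].
Qed.

Lemma unif_lim_approx F G L : unif_lim F L ->
  (forall eps, 0 < eps -> near0 (fun x y => Rabs (G x y - F x y) <= eps)) -> unif_lim G L.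
Proof.
  intros HF HGF eps Heps.
  apply near0_impl with (1 := near0_and _ _ (HF (eps / 2) ltac:(lra)) (HGF (eps / 2) ltac:(lra))).
  intros x y _ _ [A B].
  replace (G x y - L y) with ((G x y - F x y) + (F x y - L y)) by ring.
  eapply Rle_lt_trans; [apply Rabs_triang | lra].
Qed.

Lemma unif_lim_bounded F L : unif_lim F L -> bounded_on L ->
  exists M, 0 <= M /\ near0 (fun x y => Rabs (F x y) <= M).
Proof.
  intros HF [M HM]; exists (Rabs M + 1); split; [pose proof (Rabs_pos M); lra |].
  apply near0_impl with (1 := HF 1 ltac:(lra)); intros x y _ Hy A.
  specialize (HM y Hy); pose proof (Rle_abs M).
  replace (F x y) with ((F x y - L y) + L y) by ring.
  eapply Rle_trans; [apply Rabs_triang | lra].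
Qed.

Lemma unif_lim_mult F G L K : unif_lim F L -> unif_lim G K -> bounded_on L -> bounded_on K ->
  unif_lim (fun x y => F x y * G x y) (fun y => L y * K y).
Proof.
  intros HF HG [ML HML] HK eps Heps.
  destruct (unif_lim_bounded G K HG HK) as [MG [HMG0 HMG]].
  pose proof (Rabs_pos ML).
  set (e1 := eps / (2 * (MG + 1))); set (e2 := eps / (2 * (Rabs ML + 1))).
  assert (He1 : 0 < e1) by (unfold e1; apply Rdiv_lt_0_compat; lra).
  assert (He2 : 0 < e2) by (unfold e2; apply Rdiv_lt_0_compat; lra).
  assert (E1 : e1 * (MG + 1) = eps / 2) by (unfold e1; field; lra).
  assert (E2 : e2 * (Rabs ML + 1) = eps / 2) by (unfold e2; field; lra).
  apply near0_impl with (1 := near0_and _ _ (near0_and _ _ (HF e1 He1) (HG e2 He2)) HMG).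
  intros x y _ Hy [[A B] C].
  specialize (HML y Hy); pose proof (Rle_abs ML).
  replace (F x y * G x y - L y * K y)
    with ((F x y - L y) * G x y + L y * (G x y - K y)) by ring.
  eapply Rle_lt_trans; [apply Rabs_triang |]; rewrite !Rabs_mult.
  pose proof (Rabs_pos (F x y - L y)); pose proof (Rabs_pos (G x y - K y)).
  pose proof (Rabs_pos (L y)); pose proof (Rabs_pos (G x y)).
  assert (Rabs (F x y - L y) * Rabs (G x y) <= e1 * (MG + 1)) by nra.
  assert (Rabs (L y) * Rabs (G x y - K y) <= e2 * (Rabs ML + 1)) by nra.
  assert (Rabs (F x y - L y) * Rabs (G x y) < eps / 2) by nra.
  lra.
Qed.

Lemma unif_lim_zero_of_div F L : bounded_on L ->
  unif_lim (fun x y => F x y / x) L -> unif_lim F (fun _ => 0).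
Proof.
  intros HL HF.
  apply unif_lim_eq with (3 := unif_lim_mult _ _ _ _ unif_lim_fst HF (bounded_on_const 0) HL).
  - apply near0_forall; intros x y Hx _; field; lra.
  - intros; ring.
Qed.

Lemma unif_lim_scale c F L : unif_lim F L -> bounded_on L ->
  unif_lim (fun x y => c * F x y) (fun y => c * L y).
Proof.
  intros HF HL; apply (unif_lim_mult (fun _ _ => c) F (fun _ => c) L);
    auto using unif_lim_const, bounded_on_const.
Qed.

Lemma unif_lim_comp f X F L : uniform_continuity f X ->
  near0 (fun x y => X (F x y)) -> (forall y, D y -> X (L y)) ->
  unif_lim F L -> unif_lim (fun x y => f (F x y)) (fun y => f (L y)).
Proof.
  intros Hf HFX HLX HF eps Heps; destruct (Hf (mkposreal eps Heps)) as [d Hd].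
  apply near0_impl with (1 := near0_and _ _ HFX (HF d (cond_pos d))).
  intros x y _ Hy [A B]; exact (Hd _ _ A (HLX y Hy) B).
Qed.

Lemma unif_lim_div_ratio F L m : 0 < m -> (forall y, D y -> m <= L y) ->
  unif_lim F L -> unif_lim (fun x y => L y / F x y) (fun _ => 1).
Proof.
  intros Hm HLm HF eps Heps.
  pose proof (Rmin_l (m / 2) (eps * m / 2)); pose proof (Rmin_r (m / 2) (eps * m / 2)).
  set (e := Rmin (m / 2) (eps * m / 2)) in *.
  assert (He : 0 < e) by (apply Rmin_pos; [lra | apply Rdiv_lt_0_compat; nra]).
  apply near0_impl with (1 := HF e He); intros x y _ Hy A.
  specialize (HLm y Hy); apply Rabs_def2 in A; destruct A as [A1 A2].
  assert (HF2 : m / 2 < F x y) by lra.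
  replace (L y / F x y - 1) with ((L y - F x y) / F x y) by (field; lra).
  unfold Rdiv; rewrite Rabs_mult, Rabs_inv, (Rabs_right (F x y)) by lra.
  apply Rmult_lt_reg_r with (F x y); [lra |].
  rewrite Rmult_assoc, Rinv_l, Rmult_1_r by lra.
  assert (Rabs (L y - F x y) < e) by (apply Rabs_def1; lra).
  nra.
Qed.

End UniformLimit.

(* Since g_alpha(t) = (1 - alpha) t + o(t), the error term is o(T/x) with T/x bounded. *)
Lemma unif_lim_g_div a D T L : 0 <= a < 1 -> bounded_on D L ->
  near0 D (fun x y => 0 <= T x y) -> unif_lim D (fun x y => T x y / x) L ->
  unif_lim D (fun x y => g a (T x y) / x) (fun y => (1 - a) * L y).
Proof.
  intros Ha HL HT0 HTL.
  apply unif_lim_approx with (fun x y => (1 - a) * (T x y / x)); [apply unif_lim_scale; auto |].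
  intros eps Heps.
  destruct (unif_lim_bounded D _ _ HTL HL) as [M [HM0 HM]].
  set (e := eps / (M + 1)).
  assert (He : 0 < e) by (unfold e; apply Rdiv_lt_0_compat; lra).
  assert (HeM : e * M <= eps).
  { assert (e * (M + 1) = eps) by (unfold e; field; lra). nra. }
  destruct (g_linear_near0 a Ha e He) as [d [Hd Hg]].
  pose proof (unif_lim_zero_of_div D T L HL HTL d Hd) as HTd.
  apply near0_impl with (1 := near0_and _ _ _ (near0_and _ _ _ HT0 HTd) HM).
  intros x y Hx _ [[HT HTd'] HTM].
  rewrite Rminus_0_r, Rabs_right in HTd' by lra.
  rewrite Rabs_right in HTM by (apply Rle_ge, Rmult_le_pos; [| left; apply Rinv_0_lt_compat]; lra).
  specialize (Hg (T x y) (conj HT HTd')).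
  replace (g a (T x y) / x - (1 - a) * (T x y / x)) with ((g a (T x y) - (1 - a) * T x y) / x)
    by (field; lra).
  unfold Rdiv in *; rewrite Rabs_mult, (Rabs_right (/ x)) by (left; apply Rinv_0_lt_compat; lra).
  assert (0 < / x) by (apply Rinv_0_lt_compat; lra).
  apply Rle_trans with (e * T x y * / x); [apply Rmult_le_compat_r; lra |].
  rewrite Rmult_assoc; apply Rle_trans with (e * M); [apply Rmult_le_compat_l |]; lra.
Qed.

(** * Iterates of h and hbar *)

Section IterationStep.

Variables (b1 b2 a1 a2 : R).
Hypotheses (hb1 : 0 < b1) (hb2 : 0 < b2) (ha1 : 0 <= a1 < 1) (ha2 : 0 <= a2 < 1).

Variable D : R -> Prop.
Variable Z : R -> R -> R * R.
Variables (P v : R -> R).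
Hypothesis Z_fst_lim : unif_lim D (fun x y => fst (Z x y) / x) P.
Hypothesis Z_snd_lim : unif_lim D (fun x y => snd (Z x y)) v.
Hypothesis P_bounded : bounded_on D P.
Hypothesis v_range : forall y, D y -> 0 <= v y <= 8.
Hypothesis Z_range : near0 D (fun x y => 0 <= fst (Z x y) <= 8 /\ 0 <= snd (Z x y) <= 8).

Lemma v_bounded : bounded_on D v.
Proof. exists 8; intros y Hy; specialize (v_range y Hy); rewrite Rabs_right; lra. Qed.

Lemma psi_v_bounded : bounded_on D (fun y => psi (b2 * v y)).
Proof.
  exists 1; intros y Hy; specialize (v_range y Hy).
  pose proof (psi_range (b2 * v y) ltac:(nra)).
  rewrite Rabs_right; lra.
Qed.

Lemma psi_S2_lim : unif_lim D (fun x y => psi (S2 b1 b2 (Z x y))) (fun y => psi (b2 * v y)).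
Proof.
  set (K := 8 * (b1 + b2)).
  apply unif_lim_comp with (X := fun s => 0 <= s <= K); [apply psi_unif_cont | | |].
  - apply near0_impl with (1 := Z_range); intros x y _ _ [[] []]; unfold S2, K; split; nra.
  - intros y Hy; specialize (v_range y Hy); unfold K; split; nra.
  - apply unif_lim_eq with (fun x y => b1 * fst (Z x y) + b2 * snd (Z x y))
      (fun y => b1 * 0 + b2 * v y).
    + apply near0_forall; reflexivity.
    + intros; ring.
    + apply unif_lim_plus; apply unif_lim_scale; auto using bounded_on_const, v_bounded.
      exact (unif_lim_zero_of_div D _ _ P_bounded Z_fst_lim).
Qed.

Lemma h_step_fst : unif_lim D (fun x y => fst (h b1 b2 a1 a2 (Z x y)) / x)
  (fun y => phi a1 b1 * P y * psi (b2 * v y)).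
Proof.
  apply unif_lim_eq with (fun x y => g a1 (psi (S2 b1 b2 (Z x y)) * b1 * fst (Z x y)) / x)
    (fun y => (1 - a1) * (psi (b2 * v y) * b1 * P y)).
  - apply near0_impl with (1 := Z_range); intros x y _ _ [[] []].
    simpl; rewrite f1_psi by assumption; reflexivity.
  - intros; unfold phi; ring.
  - apply unif_lim_g_div; [assumption | | |].
    + repeat apply bounded_on_mult; auto using psi_v_bounded, bounded_on_const.
    + apply near0_impl with (1 := Z_range); intros x y _ _ [[] []].
      assert (HS : 0 <= S2 b1 b2 (Z x y)) by (apply S2_nonneg; auto; lra).
      pose proof (psi_range _ HS).
      apply Rmult_le_pos; [apply Rmult_le_pos |]; lra.
    + apply unif_lim_eq with (fun x y => psi (S2 b1 b2 (Z x y)) * b1 * (fst (Z x y) / x))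
        (fun y => psi (b2 * v y) * b1 * P y).
      * apply near0_forall; intros x y Hx _; field; lra.
      * reflexivity.
      * apply unif_lim_mult; auto.
        -- apply (unif_lim_mult D _ (fun _ _ => b1));
          auto using psi_S2_lim, unif_lim_const, bounded_on_const, psi_v_bounded.
        -- apply bounded_on_mult; auto using psi_v_bounded, bounded_on_const.
Qed.

Lemma h_step_snd : unif_lim D (fun x y => snd (h b1 b2 a1 a2 (Z x y)))
  (fun y => snd (h b1 b2 a1 a2 (0, v y))).
Proof.
  apply unif_lim_comp with (f := g a2) (X := fun t => 0 <= t <= 1);
    [apply g_unif_cont; assumption | | |].
  - apply near0_impl with (1 := Z_range); intros x y _ _ [[] []]; apply f2_bounds; auto.
  - intros y Hy; specialize (v_range y Hy); apply f2_bounds; simpl; auto; lra.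
  - apply unif_lim_eq with (fun x y => psi (S2 b1 b2 (Z x y)) * b2 * snd (Z x y))
      (fun y => psi (b2 * v y) * b2 * v y).
    + apply near0_impl with (1 := Z_range); intros x y _ _ [[] []].
      rewrite f2_psi by assumption; reflexivity.
    + intros y Hy; specialize (v_range y Hy).
      rewrite f2_psi by (simpl; auto; lra); unfold S2; simpl; f_equal; f_equal; f_equal; ring.
    + apply unif_lim_mult; auto using v_bounded.
      * apply (unif_lim_mult D _ (fun _ _ => b2));
          auto using psi_S2_lim, unif_lim_const, bounded_on_const, psi_v_bounded.
      * apply bounded_on_mult; auto using psi_v_bounded, bounded_on_const.
Qed.

End IterationStep.

Section Iterates.

Variables (b1 b2 a1 a2 : R).
Hypotheses (hb1 : 0 < b1) (hb2 : 0 < b2) (ha1 : 0 <= a1 < 1) (ha2 : 0 <= a2 < 1).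

Definition unit_interval (y : R) : Prop := 0 <= y <= 1.

Definition hbar_snd (n : nat) (y : R) : R :=
  Nat.iter n (fun v => snd (h b1 b2 a1 a2 (0, v))) y.

Fixpoint hbar_slope (n : nat) (y : R) : R :=
  match n with
  | O => 1
  | S m => phi a1 b1 * hbar_slope m y * psi (b2 * hbar_snd m y)
  end.

Lemma iter_hbar n x y :
  Nat.iter n (hbar b1 b2 a1 a2) (x, y) = (x * hbar_slope n y, hbar_snd n y).
Proof.
  induction n as [| n IH]; simpl; [f_equal; ring |].
  rewrite IH; unfold hbar; simpl; f_equal; ring.
Qed.

Lemma iter_h_bounds n p : 0 <= fst p <= 8 -> 0 <= snd p <= 8 ->
  0 <= fst (Nat.iter n (h b1 b2 a1 a2) p) <= 8 /\ 0 <= snd (Nat.iter n (h b1 b2 a1 a2) p) <= 8.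
Proof.
  intros Hp1 Hp2; induction n as [| n [IH1 IH2]]; simpl; [auto |].
  split; apply g_bounds; auto; [apply f1_bounds | apply f2_bounds]; auto; lra.
Qed.

Lemma hbar_snd_bounds n y : 0 <= y <= 1 -> 0 <= hbar_snd n y <= 8.
Proof.
  intros Hy; induction n as [| n IH]; simpl; [lra |].
  apply g_bounds; auto; apply f2_bounds; simpl; auto; lra.
Qed.

Lemma hbar_slope_bounds n y : 0 <= y <= 1 ->
  (phi a1 b1 * exp (- (b2 * 8))) ^ n <= hbar_slope n y <= phi a1 b1 ^ n.
Proof.
  intros Hy; assert (Hphi : 0 < phi a1 b1) by (unfold phi; nra).
  pose proof (exp_pos (- (b2 * 8))).
  induction n as [| n IH]; simpl; [lra |].
  pose proof (hbar_snd_bounds n y Hy).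
  pose proof (psi_bounds (b2 * hbar_snd n y) (b2 * 8) ltac:(split; nra)).
  assert (0 < (phi a1 b1 * exp (- (b2 * 8))) ^ n) by (apply pow_lt; nra).
  split.
  - replace (phi a1 b1 * exp (- (b2 * 8)) * (phi a1 b1 * exp (- (b2 * 8))) ^ n)
      with (phi a1 b1 * (phi a1 b1 * exp (- (b2 * 8))) ^ n * exp (- (b2 * 8))) by ring.
    apply Rmult_le_compat; try apply Rmult_le_compat_l; try apply Rmult_le_pos; lra.
  - rewrite <- (Rmult_1_r (phi a1 b1 * phi a1 b1 ^ n)).
    apply Rmult_le_compat; try apply Rmult_le_compat_l; try apply Rmult_le_pos; lra.
Qed.

Lemma iter_h_unif_lim n :
  unif_lim unit_interval (fun x y => fst (Nat.iter n (h b1 b2 a1 a2) (x, y)) / x) (hbar_slope n) /\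
  unif_lim unit_interval (fun x y => snd (Nat.iter n (h b1 b2 a1 a2) (x, y))) (hbar_snd n).
Proof.
  induction n as [| n [IH1 IH2]].
  - split; simpl.
    + apply unif_lim_eq with (fun _ _ => 1) (fun _ => 1); auto using unif_lim_const.
      apply near0_forall; intros x y Hx _; field; lra.
    + exact (unif_lim_const unit_interval (fun y => y)).
  - assert (Hslope : bounded_on unit_interval (hbar_slope n)).
    { exists (phi a1 b1 ^ n); intros y Hy; pose proof (hbar_slope_bounds n y Hy).
      assert (0 <= (phi a1 b1 * exp (- (b2 * 8))) ^ n)
        by (apply pow_le, Rmult_le_pos; [unfold phi; nra | left; apply exp_pos]).
      rewrite Rabs_right; lra. }
    assert (Hrange : near0 unit_interval (fun x y =>
        0 <= fst (Nat.iter n (h b1 b2 a1 a2) (x, y)) <= 8 /\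
        0 <= snd (Nat.iter n (h b1 b2 a1 a2) (x, y)) <= 8)).
    { exists 1; split; [lra |]; intros x y Hx Hy.
      apply iter_h_bounds; unfold unit_interval in Hy; simpl; lra. }
    split.
    + exact (h_step_fst b1 b2 a1 a2 hb1 hb2 ha1 unit_interval _ _ _ IH1 IH2 Hslope
               (hbar_snd_bounds n) Hrange).
    + exact (h_step_snd b1 b2 a1 a2 hb1 hb2 ha2 unit_interval _ _ _ IH1 IH2 Hslope
               (hbar_snd_bounds n) Hrange).
Qed.

End Iterates.

Theorem mainTheorem17 (b1 b2 a1 a2 : R)
  (hb1 : 0 < b1) (hb2 : 0 < b2)
  (ha1 : 0 <= a1 < 1) (ha2 : 0 <= a2 < 1) (k : nat) :
  forall eps : R, 0 < eps ->
  exists delta : R, 0 < delta /\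
    forall p1 p2 : R, 0 < p1 < delta -> 0 <= p2 <= 1 ->
      Rabs (fst (Nat.iter k (hbar b1 b2 a1 a2) (p1, p2))
            / fst (Nat.iter k (h b1 b2 a1 a2) (p1, p2)) - 1) < eps.
Proof.
  intros eps Heps.
  set (m := (phi a1 b1 * exp (- (b2 * 8))) ^ k).
  assert (Hm : 0 < m) by (apply pow_lt, Rmult_lt_0_compat; [unfold phi; nra | apply exp_pos]).
  assert (Hslope : forall y, unit_interval y -> m <= hbar_slope b1 b2 a1 a2 k y)
    by (intros y Hy; apply hbar_slope_bounds; assumption).
  pose proof (proj1 (iter_h_unif_lim b1 b2 a1 a2 hb1 hb2 ha1 ha2 k)) as Hlim.
  destruct (unif_lim_div_ratio _ _ _ _ Hm Hslope Hlim eps Heps) as [d [Hd Hratio]].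
  exists d; split; [exact Hd |]; intros p1 p2 Hp1 Hp2.
  specialize (Hratio p1 p2 Hp1 Hp2).
  rewrite iter_hbar; simpl fst.
  set (Xk := fst (Nat.iter k (h b1 b2 a1 a2) (p1, p2))) in *.
  replace (p1 * hbar_slope b1 b2 a1 a2 k p2 / Xk)
    with (hbar_slope b1 b2 a1 a2 k p2 / (Xk / p1))
    by (unfold Rdiv; rewrite Rinv_mult, Rinv_inv; ring).
  exact Hratio.
Qed.
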